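(* Let $G$ be a finite group of order $n$, let $f:G\to\mathbb{Q}$ be a class function with $f(g)=f(g^{-1})$ for all $g\in G$, and let $\Gamma_f=\operatorname{Cay}(G,f)$. Let $H_f=\{h\in\mathbb{Z}_n^*\mid f^h=f\}$. Then $$\mathbb{SF}(\Gamma_f)=\mathbb{Q}(\zeta_n)^{\eta^{-1}(H_f)}=\{x\in\mathbb{Q}(\zeta_n)\mid \sigma(x)=x\text{ for all }\sigma\in\eta^{-1}(H_f)\},$$ and $$\operatorname{Deg}(\Gamma_f)=\frac{\varphi(n)}{|H_f|},$$ where $\varphi$ is Euler's totient function.
   Context: $\zeta_n=e^{2\pi i/n}$; $\mathbb{Z}_n^*$ is the unit group of $\mathbb{Z}/n\mathbb{Z}$; $\eta:\operatorname{Gal}(\mathbb{Q}(\zeta_n)/\mathbb{Q})\to\mathbb{Z}_n^*$ is the isomorphism with $\sigma(\zeta_n)=\zeta_n^{\eta(\sigma)}$. A class function is constant on conjugacy classes. For $h\in\mathbb{Z}_n^*$, $f^h(g)=f(g^h)$. The Cayley colour graph $\Gamma_f=\operatorname{Cay}(G,f)$ has vertex set $G$ and adjacency matrix $[f(gh^{-1})]_{g,h\in G}$; its eigenvalues are those of this matrix. $\mathbb{SF}(\Gamma_f)$ is the smallest subfield of $\mathbb{C}$ containing all eigenvalues of $\Gamma_f$, and the algebraic degree is $\operatorname{Deg}(\Gamma_f)=[\mathbb{SF}(\Gamma_f):\mathbb{Q}]$. *)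

From HB Require Import structures.
From mathcomp Require Import all_boot all_order all_algebra all_fingroup all_field.
Set Implicit Arguments. Unset Strict Implicit. Unset Printing Implicit Defensive.
Import Order.TTheory GRing.Theory Num.Theory.
Local Open Scope ring_scope.

Definition is_subfield (S : algC -> Prop) : Prop :=
  S 0 /\ S 1 /\
  (forall x y, S x -> S y -> S (x + y)) /\
  (forall x, S x -> S (- x)) /\
  (forall x y, S x -> S y -> S (x * y)) /\
  (forall x, S x -> S x^-1).

Definition gen_field (P : algC -> Prop) (x : algC) : Prop :=
  forall S, is_subfield S -> (forall y, P y -> S y) -> S x.

Definition Qdim (S : algC -> Prop) (d : nat) : Prop :=
  exists b : d.-tuple algC,
    [/\ (forall i, S (tnth b i)),
        (forall x, S x <-> exists c : d.-tuple rat,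
                               x = \sum_(i < d) ratr (tnth c i) * tnth b i) &
        (forall c : d.-tuple rat,
            \sum_(i < d) ratr (tnth c i) * tnth b i = 0 -> forall i, tnth c i = 0)].

Definition cayley_adj (gT : finGroupType) (G : {group gT}) (f : gT -> rat)
  : 'M[algC]_#|G| :=
  \matrix_(i, j) ratr (f (enum_val i * (enum_val j)^-1)%g).

Definition SF (gT : finGroupType) (G : {group gT}) (f : gT -> rat) : algC -> Prop :=
  gen_field (fun a => eigenvalue (cayley_adj G f) a).

Definition Hf (gT : finGroupType) (G : {group gT}) (f : gT -> rat) : {set 'I_#|G|} :=
  [set h : 'I_#|G| | coprime h #|G| && [forall g in G, f (g ^+ h)%g == f g]].

(* The adjacency matrix of Cay(G, f) is the group-algebra element of the class
   function f, so it splits along the central idempotents chi_i(1)/|G| chi_i of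
   the irreducible characters, and its eigenvalues are the numbers
   lambda_i = chi_i(1)^-1 sum_x f(x) chi_i(x)^*.  They lie in Q(zeta_n), and the
   automorphism zeta_n |-> zeta_n^h maps chi_i(x) to chi_i(x^h); comparing the
   Fourier expansions of f and f^h, it fixes every lambda_i exactly when
   f^h = f.  Hence SF(Gamma_f) is the fixed field of the subgroup of
   Gal(Q(zeta_n)/Q) ~ Z_n^* corresponding to H_f, of degree phi(n)/|H_f|. *)

From HB Require Import structures.
From mathcomp Require Import all_boot all_order all_algebra all_fingroup all_field.
From mathcomp Require Import all_solvable all_character.
From mathcomp Require Import ring.
Import Order.TTheory GRing.Theory Num.Theory.
Local Open Scope ring_scope.
Set Implicit Arguments. Unset Strict Implicit. Unset Printing Implicit Defensive.

Section Subfield.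

Variable S : algC -> Prop.
Hypothesis sS : is_subfield S.

Lemma subfield0 : S 0. Proof. by case: sS. Qed.
Lemma subfield1 : S 1. Proof. by case: sS => _ []. Qed.
Lemma subfieldD x y : S x -> S y -> S (x + y).
Proof. by case: sS => _ [_ [sD _]]; apply: sD. Qed.
Lemma subfieldN x : S x -> S (- x). Proof. by case: sS => _ [_ [_ [sN _]]]; apply: sN. Qed.
Lemma subfieldM x y : S x -> S y -> S (x * y).
Proof. by case: sS => _ [_ [_ [_ [sM _]]]]; apply: sM. Qed.
Lemma subfieldV x : S x -> S x^-1.
Proof. by case: sS => _ [_ [_ [_ [_ sV]]]]; apply: sV. Qed.

Lemma subfield_sum (I : Type) (r : seq I) (P : pred I) (F : I -> algC) :
  (forall i, P i -> S (F i)) -> S (\sum_(i <- r | P i) F i).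
Proof. by apply: big_ind; [exact: subfield0 | exact: subfieldD]. Qed.

Lemma subfieldX x k : S x -> S (x ^+ k).
Proof.
move=> Sx; elim: k => [|k IHk]; first by rewrite expr0; apply: subfield1.
by rewrite exprS; apply: subfieldM.
Qed.

Lemma subfield_nat k : S k%:R.
Proof.
elim: k => [|k IHk]; first exact: subfield0.
by rewrite -addn1 natrD; apply: subfieldD IHk subfield1.
Qed.

Lemma subfield_rat q : S (ratr q).
Proof.
have int_in (m : int) : S m%:~R.
  case: m => m; first exact: subfield_nat.
  by rewrite NegzE mulrNz; apply/subfieldN/subfield_nat.
rewrite -[q]divq_num_den fmorph_div !rmorph_int.
by apply/subfieldM/subfieldV.
Qed.

End Subfield.

Lemma gen_field_subfield P : is_subfield (gen_field P).
Proof.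
split; first by move=> S sS _; apply: subfield0.
split; first by move=> S sS _; apply: subfield1.
split; first by move=> x y Px Py S sS PS; apply: subfieldD (Px S sS PS) (Py S sS PS).
split; first by move=> x Px S sS PS; apply: subfieldN (Px S sS PS).
split; first by move=> x y Px Py S sS PS; apply: subfieldM (Px S sS PS) (Py S sS PS).
by move=> x Px S sS PS; apply: subfieldV (Px S sS PS).
Qed.

Lemma gen_field_in (P : algC -> Prop) y : P y -> gen_field P y.
Proof. by move=> Py S _; apply. Qed.

Lemma eq_gen_field (P Q : algC -> Prop) :
  (forall y, P y <-> Q y) -> forall x, gen_field P x <-> gen_field Q x.
Proof. by move=> PQ x; split=> Px S sS SQ; apply: Px => // y /PQ; apply: SQ. Qed.

Lemma rmorph_fixed_subfield (u : {rmorphism algC -> algC}) :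
  is_subfield (fun x => u x = x).
Proof.
split; first exact: rmorph0.
split; first exact: rmorph1.
split; first by move=> x y ux uy; rewrite rmorphD ux uy.
split; first by move=> x ux; rewrite rmorphN ux.
split; first by move=> x y ux uy; rewrite rmorphM ux uy.
by move=> x ux; rewrite fmorphV ux.
Qed.

Section NumberFieldImage.

Variables (L : fieldExtType rat) (phi : {rmorphism L -> algC}).

Definition vimage (E : {vspace L}) (x : algC) : Prop := exists2 a, a \in E & x = phi a.

Lemma vimage_subfield (E : {subfield L}) : is_subfield (vimage E).
Proof.
split; first by exists 0; rewrite ?mem0v ?rmorph0.
split; first by exists 1; rewrite ?mem1v ?rmorph1.
split; first by move=> _ _ [a Ea ->] [b Eb ->]; exists (a + b); rewrite ?memvD ?rmorphD.
split; first by move=> _ [a Ea ->]; exists (- a); rewrite ?memvN ?rmorphN.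
split; first by move=> _ _ [a Ea ->] [b Eb ->]; exists (a * b); rewrite ?memvM ?rmorphM.
by move=> _ [a Ea ->]; exists a^-1; rewrite ?memvV ?fmorphV.
Qed.

Lemma subfield_adjoin_seq S (rs : seq L) : is_subfield S ->
  (forall a, a \in rs -> S (phi a)) -> forall b, b \in <<1 & rs>>%VS -> S (phi b).
Proof.
move=> sS; suff adjK (K : {subfield L}) : (forall c, c \in K -> S (phi c)) ->
    (forall a, a \in rs -> S (phi a)) -> forall b, b \in <<K & rs>>%VS -> S (phi b).
  apply: (adjK 1%AS) => c /vlineP[r ->].
  by rewrite alg_num_field fmorph_rat; apply: subfield_rat.
elim: rs K => [|x rs IHrs] K inK inrs b; first by rewrite Fadjoin_nil; apply: inK.
rewrite adjoin_cons; apply: IHrs => [c /Fadjoin_polyP[p /polyOverP Kp ->] | c rs_c].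
  rewrite horner_coef rmorph_sum; apply: subfield_sum => // i _.
  rewrite rmorphM rmorphXn; apply: subfieldM (inK _ (Kp i)) _ => //.
  by apply: subfieldX => //; apply: inrs; rewrite inE eqxx.
by apply: inrs; rewrite inE rs_c orbT.
Qed.

Lemma gen_field_vimage (rs : seq L) x :
  gen_field (fun y => exists2 a, a \in rs & y = phi a) x <-> vimage <<1 & rs>>%AS x.
Proof.
split=> [genx | [b rs_b ->]].
  apply: genx (vimage_subfield _) _ => _ [a rs_a ->].
  by exists a => //; apply: seqv_sub_adjoin.
apply: subfield_adjoin_seq rs_b => [|a rs_a]; first exact: gen_field_subfield.
by apply: gen_field_in; exists a.
Qed.

Lemma Qdim_vimage (E : {vspace L}) (S : algC -> Prop) :
  (forall x, S x <-> vimage E x) -> Qdim S (\dim E).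
Proof.
move=> SE; pose bs := vbasis E; exists (map_tuple phi bs); split.
- move=> i; apply/SE; exists (tnth bs i); last by rewrite tnth_map.
  exact/vbasis_mem/mem_tnth.
- move=> x; split=> [/SE[b Eb ->] | [c ->]].
    exists [tuple coord bs i b | i < \dim E].
    rewrite {1}(coord_vbasis Eb) rmorph_sum; apply: eq_bigr => i _.
    by rewrite rmorphZ_num !tnth_map tnth_ord_tuple (tnth_nth 0).
  apply/SE; exists (\sum_i tnth c i *: tnth bs i).
    by apply: memv_suml => i _; apply/memvZ/vbasis_mem/mem_tnth.
  by rewrite rmorph_sum; apply: eq_bigr => i _; rewrite rmorphZ_num tnth_map.
- move=> c c0 i; have /freeP := basis_free (vbasisP E); apply.
  apply: (fmorph_inj phi); rewrite rmorph0 rmorph_sum -[RHS]c0.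
  by apply: eq_bigr => j _; rewrite rmorphZ_num tnth_map (tnth_nth 0).
Qed.

End NumberFieldImage.

Lemma rmorph_unity_root_expr (F : fieldType) (nu : {rmorphism F -> F}) n z k :
  n.-primitive_root z -> nu z = z ^+ k -> forall e, e ^+ n = 1 -> nu e = e ^+ k.
Proof. by move=> prim_z nuz e /(prim_rootP prim_z)[j ->]; rewrite rmorphXn nuz exprAC. Qed.

Lemma rmorph_char_expg (gT : finGroupType) (G : {group gT}) (chi : 'CF(G))
    (u : {rmorphism algC -> algC}) k :
    chi \is a character -> (forall e, e ^+ #|G| = 1 -> u e = e ^+ k) ->
  {in G, forall x, u (chi x) = chi (x ^+ k)%g}.
Proof.
move=> /char_reprP[[m rG] ->] uX x Gx.
have [e [[B uB rGx] [e1 _] [chix _] _]] := repr_rsim_diag rG Gx.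
have rGxX j : rG (x ^+ j)%g = invmx B *m diag_mx (\row_i (e 0 i ^+ j)) *m B.
  elim: j => [|j IHj].
    rewrite expg0 repr_mx1 (_ : \row_i _ = const_mx 1) ?diag_const_mx ?mulmx1 ?mulVmx //.
    by apply/rowP=> i; rewrite !mxE.
  rewrite expgSr repr_mxM ?groupX // IHj rGx -!mulmxA (mulmxA B) mulmxV // mul1mx.
  rewrite !mulmxA -(mulmxA (invmx B) (diag_mx _) (diag_mx e)) mulmx_diag.
  by congr (_ *m diag_mx _ *m _); apply/rowP=> i; rewrite !mxE exprSr.
rewrite chix rmorph_sum cfunE groupX // mulr1n rGxX mxtrace_mulC mulmxA mulmxV //.
rewrite mul1mx mxtrace_diag; apply: eq_bigr => i _; rewrite mxE; apply: uX.
by have /dvdnP[q ->] := order_dvdG Gx; rewrite mulnC exprM e1 expr1n.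
Qed.

Lemma sum_expg_coprime (gT : finGroupType) (G : {group gT}) k (F : gT -> algC) :
  coprime #|G| k -> \sum_(x in G) F (x ^+ k)%g = \sum_(x in G) F x.
Proof.
move=> coGk; have expK := expgK coGk.
have injX : {in G &, injective (expgn^~ k)}.
  by move=> x y Gx Gy Exy; rewrite -(expK x) // Exy expK.
rewrite -(big_imset _ injX); apply: eq_bigl => y; apply/imsetP/idP=> [[x Gx ->]|Gy].
  exact: groupX.
by exists (y ^+ expg_invn G k)%g; rewrite ?groupX // -expgM mulnC expgM expK.
Qed.

Section GroupMatrix.

Variables (gT : finGroupType) (G : {group gT}).

Definition gmx (phi : gT -> algC) : 'M[algC]_#|G| :=
  \matrix_(i, j) phi (enum_val i * (enum_val j)^-1)%g.

Lemma eq_gmx phi psi : {in G, phi =1 psi} -> gmx phi = gmx psi.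
Proof.
by move=> eq_phi; apply/matrixP=> i j; rewrite !mxE eq_phi ?groupM ?groupV ?enum_valP.
Qed.

Lemma gmxZ c phi : gmx (fun x => c * phi x) = c *: gmx phi.
Proof. by apply/matrixP=> a b; rewrite !mxE. Qed.

Lemma mul_gmx phi psi : {in G &, forall x y, phi (y * x)%g = phi (x * y)%g} ->
  gmx phi *m gmx psi = gmx (fun y => \sum_(x in G) phi (x * y)%g * psi x^-1%g).
Proof.
move=> phiC; apply/matrixP=> a b; rewrite !mxE.
have [Ga Gb] := (enum_valP a, enum_valP b).
set ga := enum_val a in Ga *; set gb := enum_val b in Gb *.
transitivity (\sum_(g in G) phi (ga * g^-1)%g * psi (g * gb^-1)%g).
  by rewrite [RHS]big_enum_val; apply: eq_bigr => c _; rewrite !mxE.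
have injVM : injective (fun x : gT => x^-1 * gb)%g by move=> x1 x2 /mulIg /invg_inj.
rewrite (reindex_inj injVM) /=; apply: eq_big => [x | x Gx].
  by rewrite groupMr ?groupV.
rewrite invMg invgK mulgA mulgK phiC ?groupM ?groupV //.
by have := groupM Gx (groupVr Gb); rewrite mulgK groupV.
Qed.

Lemma cfunMC (phi : 'CF(G)) : {in G &, forall x y, phi (y * x)%g = phi (x * y)%g}.
Proof. by move=> x y Gx _; rewrite -[RHS](cfunJ _ _ Gx) conjgE -mulgA mulKg. Qed.

Definition irr_idem_mx (i : Iirr G) := gmx (fun x => 'chi_i 1%g / #|G|%:R * 'chi_i x).

Lemma irr_idem_mxM i j : irr_idem_mx i *m irr_idem_mx j = (i == j)%:R *: irr_idem_mx i.
Proof.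
rewrite mul_gmx => [|x y Gx Gy]; last by rewrite cfunMC.
rewrite -gmxZ; apply: eq_gmx => y Gy /=.
under eq_bigr do rewrite mulrACA.
rewrite -mulr_sumr.
have nz_G := neq0CG G; have nz_i1 := irr1_neq0 i.
have := generalized_orthogonality_relation y i j.
rewrite mulrC => /(canRL (mulfK (invr_neq0 nz_G))) ->.
have [<-{j} | _] := eqVneq i j; last by rewrite !(mul0r, mulr0).
by field; rewrite nz_G nz_i1.
Qed.

Lemma sum_irr_idem_mx : \sum_i irr_idem_mx i = 1%:M.
Proof.
apply/matrixP=> a b; rewrite summxE !mxE.
transitivity (#|G|%:R^-1 * cfReg G (enum_val a * (enum_val b)^-1)%g).
  rewrite cfReg_sum sum_cfunE mulr_sumr; apply: eq_bigr => i _.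
  by rewrite !mxE cfunE mulrAC mulrC mulrA.
rewrite cfRegE -eq_mulgV1 (inj_eq enum_val_inj).
by case: (a == b); rewrite ?mulr0 // mulVf ?neq0CG.
Qed.

Lemma irr_idem_mx_neq0 i : irr_idem_mx i != 0.
Proof.
pose r1 := enum_rank_in (group1 G) 1%g.
have nz_i1 := irr1_neq0 i; have nz_G := invr_neq0 (neq0CG G).
apply: contraNneq (mulf_neq0 (mulf_neq0 nz_i1 nz_G) nz_i1).
by move/matrixP/(_ r1 r1)/eqP; rewrite !mxE mulgV.
Qed.

End GroupMatrix.

Lemma eigenvalue_idem_sum (n : nat) (I : finType) (E : I -> 'M[algC]_n) (l : I -> algC) :
    (forall i j, E i *m E j = (i == j)%:R *: E i) -> \sum_i E i = 1%:M ->
    (forall i, E i != 0) ->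
  forall a, eigenvalue (\sum_i l i *: E i) a <-> exists i, a = l i.
Proof.
move=> EE sumE nzE a; set A := \sum_i l i *: E i.
have mulAE i : A *m E i = l i *: E i.
  rewrite /A mulmx_suml (bigD1 i) //= big1 => [|j nji].
    by rewrite -scalemxAl EE eqxx scale1r addr0.
  by rewrite -scalemxAl EE (negbTE nji) scale0r scaler0.
have mulEA i : E i *m A = l i *: E i.
  rewrite /A mulmx_sumr (bigD1 i) //= big1 => [|j nji].
    by rewrite -scalemxAr EE eqxx scale1r addr0.
  by rewrite -scalemxAr EE eq_sym (negbTE nji) scale0r scaler0.
split=> [/eigenvalueP[v vA nz_v] | [i ->]].
  have [i /eqP-> | l'a] := pickP (fun i => a == l i); first by exists i.
  case/eqP: nz_v; rewrite -[v]mulmx1 -sumE mulmx_sumr big1 // => i _.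
  have: (a - l i) *: (v *m E i) = 0.
    by rewrite scalerBl scalemxAl -vA -mulmxA mulAE -scalemxAr subrr.
  by move/eqP; rewrite scaler_eq0 subr_eq0 l'a => /eqP.
apply/eigenvalueP; have [r nz_r | E0] := pickP (fun r => row r (E i) != 0).
  exists (row r (E i)) => //.
  by rewrite -row_mul mulEA; apply/rowP=> k; rewrite !mxE.
case/eqP: (nzE i); apply/row_matrixP => r.
by have /negbFE/eqP-> := E0 r; rewrite row0.
Qed.

Section CayleySpectrum.

Variables (gT : finGroupType) (G : {group gT}) (f : gT -> rat).
Hypothesis fclass : forall x y, x \in G -> y \in G -> f (x ^ y)%g = f x.

Lemma cayley_class_fun :
  is_class_fun <<G>>%g [ffun x => (ratr (f x) : algC) *+ (x \in G)].
Proof.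
rewrite genGid; apply: intro_class_fun => [x y Gx Gy | x /negbTE-> //].
by rewrite groupJr // fclass.
Qed.

Definition cayley_cfun : 'CF(G) := Cfun 0 cayley_class_fun.

Lemma cayley_cfunE : {in G, forall x, cayley_cfun x = ratr (f x)}.
Proof. by move=> x Gx; rewrite cfunE Gx mulr1n. Qed.

Definition cayley_eigen (i : Iirr G) : algC :=
  ('chi_i 1%g)^-1 * \sum_(x in G) ratr (f x) * ('chi_i x)^*.

Lemma cayley_eigen_cfdot i :
  cayley_eigen i * ('chi_i 1%g / #|G|%:R) = '[cayley_cfun, 'chi_i].
Proof.
rewrite cfdotE /cayley_eigen; under [in RHS]eq_bigr => x Gx do rewrite cayley_cfunE //.
by field; rewrite irr1_neq0 neq0CG.
Qed.

Lemma cayley_adj_idem_decomp : cayley_adj G f = \sum_i cayley_eigen i *: irr_idem_mx i.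
Proof.
apply/matrixP=> a b; rewrite summxE !mxE -cayley_cfunE ?groupM ?groupV ?enum_valP //.
rewrite {1}(cfun_sum_cfdot cayley_cfun) sum_cfunE; apply: eq_bigr => i _.
by rewrite !mxE cfunE -cayley_eigen_cfdot -mulrA.
Qed.

Lemma cayley_adj_eigenvalueP a :
  eigenvalue (cayley_adj G f) a <-> exists i, a = cayley_eigen i.
Proof.
rewrite cayley_adj_idem_decomp; apply: eigenvalue_idem_sum.
- exact: irr_idem_mxM.
- exact: sum_irr_idem_mx.
- exact: irr_idem_mx_neq0.
Qed.

(* [nu] maps chi_i(x) to chi_i(x^k): compare the Fourier expansions of f and of
   x |-> f(x^k) in the irreducible characters. *)
Lemma cayley_eigen_fixedP (nu : {rmorphism algC -> algC}) k :
    (forall e, e ^+ #|G| = 1 -> nu e = e ^+ k) -> coprime k #|G| ->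
  (forall i, nu (cayley_eigen i) = cayley_eigen i) <-> {in G, forall g, f (g ^+ k)%g = f g}.
Proof.
move=> nuX coGk; have nu_chi i := rmorph_char_expg (irr_char i) nuX.
split=> [nu_eigen g Gg | fX i].
  suff: ratr (f (g ^+ k)%g) = ratr (f g) :> algC.
    by move/eqP; rewrite (inj_eq (fmorph_inj _)) => /eqP.
  rewrite -[LHS]cayley_cfunE ?groupX // -(fmorph_rat nu) -[X in nu X]cayley_cfunE //.
  rewrite {1 2}(cfun_sum_cfdot cayley_cfun) !sum_cfunE rmorph_sum; apply: eq_bigr => i _.
  rewrite !cfunE -cayley_eigen_cfdot rmorphM (rmorphM nu (cayley_eigen i)) nu_eigen.
  by rewrite fmorph_div rmorph_nat (nu_chi _ 1%g) // expg1n nu_chi.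
rewrite /cayley_eigen rmorphM fmorphV rmorph_sum (nu_chi _ 1%g) // expg1n; congr (_ * _).
transitivity (\sum_(x in G) (fun y => ratr (f y) * 'chi_i y^-1%g) (x ^+ k)%g).
  apply: eq_bigr => x Gx; rewrite rmorphM fmorph_rat -irr_inv nu_chi ?groupV //.
  by rewrite fX // expgVn.
rewrite (sum_expg_coprime (fun y => ratr (f y) * 'chi_i y^-1%g)) 1?coprime_sym //.
by apply: eq_bigr => x _; rewrite irr_inv.
Qed.

End CayleySpectrum.

Lemma Gal_adjoin_seqE (F : fieldType) (L : splittingFieldType F) (s : seq L)
    (sg : gal_of {:L}) :
  (sg \in 'Gal({:L} / <<1 & s>>))%g = all (fun a => sg a == a) s.
Proof.
rewrite -sub1set galois_connection ?subvf //.
apply/Fadjoin_seqP/allP=> [[_ fix_s] a s_a | fix_s].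
  by have /mem_fixedFieldP[_ ->] := fix_s a s_a; rewrite ?set11.
split=> [|a s_a]; first exact: sub1v.
by apply/fixedFieldP=> [|_ /set1P->]; [exact: memvf | apply/eqP/fix_s].
Qed.

Lemma dim_subfield_Gal (F : fieldType) (L : splittingFieldType F) (E : {subfield L}) :
  galois E {:L} -> \dim E = (\dim {:L} %/ #|'Gal({:L} / E)%g|)%N.
Proof.
by move=> galE; rewrite (dim_sup_field (subvf E)) galois_dim // mulKn ?cardG_gt0.
Qed.

Section CyclotomicField.

Variables (n : nat) (Qn : splittingFieldType rat) (QnC : {rmorphism Qn -> algC}).
Variable w : Qn.
Hypotheses (prim_w : n.-primitive_root w) (gen_w : <<1; w>>%VS = fullv).

Lemma prim_root_generates (w0 : Qn) : n.-primitive_root w0 -> <<1; w0>>%VS = fullv.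
Proof.
move=> prim_w0; apply/eqP; rewrite eqEsubv subvf -gen_w /=.
have [i ->] := prim_rootP prim_w0 (prim_expr_order prim_w).
by rewrite (sub_adjoin1v _ <<1; w0>>%AS) rpredX // memv_adjoin.
Qed.

Lemma gen_field_prim_root x : gen_field (fun y => y = QnC w) x <-> vimage QnC fullv x.
Proof.
rewrite -gen_w -adjoin_seq1 -gen_field_vimage; apply: eq_gen_field => y.
by split=> [-> | [a /[!inE] /eqP-> ->]]; first by exists w; rewrite ?inE.
Qed.

Lemma gal_eq_prim_root (s1 s2 : gal_of {:Qn}) : s1 w = s2 w -> s1 = s2.
Proof.
move=> s12w; apply/eqP/gal_eqP => b _.
have /Fadjoin_polyP[p /polyOverP Kp ->] : b \in <<1; w>>%VS by rewrite gen_w memvf.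
rewrite -!horner_map; congr (_.[_]); last exact: s12w.
apply/polyP=> i; rewrite !coef_map /=.
by have /vlineP[r ->] := Kp i; rewrite !rmorph_alg.
Qed.

Lemma gal_prim_rootX (sg : gal_of {:Qn}) : exists2 k : 'I_n, coprime k n & sg w = w ^+ k.
Proof.
have prim_sgw : n.-primitive_root (sg w) by rewrite fmorph_primitive_root.
have [k Dk] := prim_rootP prim_w (prim_expr_order prim_sgw).
by exists k => //; rewrite -(prim_root_exp_coprime k prim_w) -Dk.
Qed.

(* Over Q the minimal polynomial of a primitive root is the cyclotomic
   polynomial, whose roots are all its coprime powers. *)
Lemma minPoly_prim_rootX h : coprime h n -> root (minPoly 1 w) (w ^+ h).
Proof.
move=> co_h_n; have n_gt0 := prim_order_gt0 prim_w.
have prim_Cw : n.-primitive_root (QnC w) by rewrite fmorph_primitive_root.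
rewrite -(fmorph_root QnC) rmorphXn.
have [q Dq] : exists q, map_poly QnC (minPoly 1 w) = map_poly ratr q.
  have /(_ _)/sig_eqW a_ i := vlineP _ _ (polyOverP (minPolyOver 1 w) i).
  exists (\poly_(i < size (minPoly 1 w)) sval (a_ i)); apply/polyP=> i.
  rewrite coef_poly coef_map coef_poly /=; case: ifP => _; rewrite ?rmorph0 //.
  by case: (a_ i) => a /= ->; rewrite alg_num_field fmorph_rat.
have: root (map_poly QnC (minPoly 1 w)) (QnC w) by rewrite fmorph_root root_minPoly.
rewrite Dq; have [cq [Dcq _] ->] := minCpolyP (QnC w).
case/dvdpP=> r ->; rewrite rmorphM rootM /= -Dcq (minCpoly_cyclotomic prim_Cw) /cyclotomic.
rewrite (bigD1 (Ordinal (ltn_pmod h n_gt0))) ?coprime_modl //=.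
by rewrite rootM root_XsubC prim_expr_mod ?eqxx ?orbT.
Qed.

Hypothesis galQn : galois 1 {:Qn}.

(* The automorphism w |-> w^h, for h coprime to n (junk value 1 otherwise). *)
Definition gal_prim_root_exp (h : nat) : gal_of {:Qn} :=
  odflt 1%g [pick sg : gal_of {:Qn} | sg w == w ^+ h].

Lemma gal_prim_root_expE h : coprime h n -> gal_prim_root_exp h w = w ^+ h.
Proof.
move=> co_h_n; rewrite /gal_prim_root_exp; case: pickP => [sg /eqP // | no_sg].
have /and3P[_ _ nQn] := galQn.
have [sg _ Dsg] :=
  normalField_root_minPoly (sub1v _) nQn (memvf w) (minPoly_prim_rootX co_h_n).
by have := no_sg sg; rewrite Dsg eqxx.
Qed.

Lemma card_Gal_prim_rootX (A : {set gal_of {:Qn}}) (H : {set 'I_n}) :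
    (forall h, h \in H -> coprime h n) ->
    (forall (sg : gal_of {:Qn}) (k : 'I_n),
       coprime k n -> sg w = w ^+ k -> (sg \in A) = (k \in H)) ->
  #|A| = #|H|.
Proof.
move=> coH memA; have expE := gal_prim_root_expE.
have -> : A = [set gal_prim_root_exp h | h : 'I_n in H].
  apply/setP=> sg; apply/idP/imsetP => [Asg | [k Hk ->]].
    have [k co_k Dk] := gal_prim_rootX sg; exists k; first by rewrite -(memA sg k).
    by apply: gal_eq_prim_root; rewrite Dk expE.
  by rewrite (memA _ k) ?expE ?coH.
rewrite card_in_imset // => h1 h2 /coH co1 /coH co2 eq_exp.
have := congr1 (fun sg : gal_of {:Qn} => sg w) eq_exp.
rewrite /= !expE // => /eqP; rewrite (eq_prim_root_expr prim_w) !modn_small //.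
by move/eqP/val_inj.
Qed.

Lemma card_Gal_cyclotomic : #|'Gal({:Qn} / 1)%g| = totient n.
Proof.
rewrite (card_Gal_prim_rootX (H := [set h : 'I_n | coprime h n])) => [|h|sg k co_k _].
- rewrite totient_count_coprime big_mkord -sum1_card big_mkcond /=.
  by apply: eq_bigr => i _; rewrite inE coprime_sym; case: coprime.
- by rewrite inE.
- by rewrite gal_kHom ?sub1v // k1AHom inE co_k.
Qed.

End CyclotomicField.

Section CayleySpectralField.

Variables (gT : finGroupType) (G : {group gT}) (f : gT -> rat).
Hypothesis fclass : forall x y, x \in G -> y \in G -> f (x ^ y)%g = f x.

Variables (Qn : splittingFieldType rat) (QnC : {rmorphism Qn -> algC}) (w : Qn).
Hypotheses (galQn : galois 1 {:Qn}) (prim_w : #|G|.-primitive_root w)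
  (gen_w : <<1; w>>%VS = fullv).
Hypothesis QnC_aut :
  forall sg : gal_of {:Qn}, {nu : {rmorphism algC -> algC} | {morph QnC : a / sg a >-> nu a}}.
Hypothesis Qn_chi : forall i x, x \in G -> exists a, QnC a = 'chi[G]_i x.

Lemma cayley_eigen_Qn (i : Iirr G) : exists a, QnC a == cayley_eigen f i.
Proof.
have QnCS := vimage_subfield QnC {:Qn}%AS.
have Qn_all x : (exists a, QnC a = x) -> vimage QnC fullv x.
  by case=> a <-; exists a; rewrite ?memvf.
suff [a _ ->] : vimage QnC fullv (cayley_eigen f i) by exists a.
apply: subfieldM => //.
  by apply: subfieldV => //; apply: Qn_all; apply: Qn_chi (group1 G).
apply: subfield_sum => // x Gx; apply: subfieldM (subfield_rat QnCS _) _ => //.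
by rewrite -irr_inv; apply: Qn_all; apply: Qn_chi; rewrite groupV.
Qed.

Definition eigen_Qn (i : Iirr G) : Qn := xchoose (cayley_eigen_Qn i).

Lemma eigen_QnE (i : Iirr G) : QnC (eigen_Qn i) = cayley_eigen f i.
Proof. exact/eqP/(xchooseP (cayley_eigen_Qn i)). Qed.

Definition spectral_field : {subfield Qn} :=
  <<1 & [seq eigen_Qn i | i <- enum (Iirr G)]>>%AS.

Lemma SF_spectral_field x : SF G f x <-> vimage QnC spectral_field x.
Proof.
rewrite -gen_field_vimage; apply: eq_gen_field => y.
rewrite cayley_adj_eigenvalueP //; split=> [[i ->] | [_ /mapP[i _ ->] ->]].
  by exists (eigen_Qn i); rewrite ?eigen_QnE ?map_f ?mem_enum.
by exists i; rewrite eigen_QnE.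
Qed.

Lemma QnC_prim_root : #|G|.-primitive_root (QnC w).
Proof. by rewrite fmorph_primitive_root. Qed.

Lemma rmorph_gal_prim_root (sg : gal_of {:Qn}) k : sg w = w ^+ k ->
  {nu : {rmorphism algC -> algC} | {morph QnC : a / sg a >-> nu a}
     & forall e, e ^+ #|G| = 1 -> nu e = e ^+ k}.
Proof.
move=> sgw; have [nu nuE] := QnC_aut sg; exists nu => //.
apply: rmorph_unity_root_expr QnC_prim_root _.
by rewrite -nuE sgw rmorphXn.
Qed.

Lemma Gal_spectral_field (sg : gal_of {:Qn}) (k : 'I_#|G|) :
    coprime k #|G| -> sg w = w ^+ k ->
  (sg \in 'Gal({:Qn} / spectral_field)%g) = (k \in Hf G f).
Proof.
move=> co_k sgw; have [nu nuE nuX] := rmorph_gal_prim_root sgw.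
rewrite Gal_adjoin_seqE all_map inE co_k /=.
apply/allP/forall_inP => [fix_sg g Gg | fX i _].
  apply/eqP; apply: (iffLR (cayley_eigen_fixedP fclass nuX co_k)) => // i.
  by rewrite -eigen_QnE -nuE (eqP (fix_sg i _)) ?mem_enum.
apply/eqP/(fmorph_inj QnC); rewrite nuE eigen_QnE.
by apply: (iffRL (cayley_eigen_fixedP fclass nuX co_k)) => g Gg; apply/eqP/fX.
Qed.

Lemma galois_spectral_field : galois spectral_field {:Qn}.
Proof. by apply: galoisS galQn; rewrite sub1v subvf. Qed.

Lemma dim_spectral_field : \dim spectral_field = (totient #|G| %/ #|Hf G f|)%N.
Proof.
have card_Gal : #|'Gal({:Qn} / spectral_field)%g| = #|Hf G f|.
  apply: (card_Gal_prim_rootX QnC prim_w gen_w galQn) Gal_spectral_field => h.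
  by rewrite inE => /andP[].
rewrite dim_subfield_Gal ?galois_spectral_field // card_Gal.
by rewrite -(card_Gal_cyclotomic QnC prim_w) // -galois_dim // dimv1 divn1.
Qed.

Lemma spectral_field_fixedP x :
  vimage QnC spectral_field x <->
  vimage QnC fullv x /\
  forall (u : {rmorphism algC -> algC}) (h : 'I_#|G|),
    h \in Hf G f -> u (QnC w) = QnC w ^+ h -> u x = x.
Proof.
split=> [Sx | [[b _ ->] fixHf]].
  split; first by case: Sx => b _ ->; exists b; rewrite ?memvf.
  move=> u h; rewrite inE => /andP[co_h /forall_inP fX] uw.
  have uX := rmorph_unity_root_expr QnC_prim_root uw.
  move/SF_spectral_field: Sx => /(_ _ (rmorph_fixed_subfield u)); apply.
  move=> _ /cayley_adj_eigenvalueP-/(_ fclass)[i ->].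
  by apply: (iffRL (cayley_eigen_fixedP fclass uX co_h)) => g Gg; apply/eqP/fX.
exists b => //; rewrite -(galois_fixedField galois_spectral_field).
apply/fixedFieldP=> [|sg Gal_sg]; first exact: memvf.
have [k co_k sgw] := gal_prim_rootX prim_w sg.
have [nu nuE nuX] := rmorph_gal_prim_root sgw.
apply: (fmorph_inj QnC); rewrite nuE; apply: (fixHf nu k).
  by rewrite -(Gal_spectral_field co_k sgw).
by rewrite -nuE sgw rmorphXn.
Qed.

End CayleySpectralField.

Unset Implicit Arguments.

Theorem mainTheorem6 (gT : finGroupType) (G : {group gT}) (f : gT -> rat)
  (z : algC) (zprim : #|G|.-primitive_root z)
  (fclass : forall x y, x \in G -> y \in G -> f (x ^ y)%g = f x)
  (fsym : forall x, x \in G -> f (x^-1)%g = f x) :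
  (forall x : algC,
     SF G f x <->
     (gen_field (fun y => y = z) x /\
      forall (u : {rmorphism algC -> algC}) (h : 'I_#|G|),
        h \in Hf G f -> u z = z ^+ h -> u x = x))
  /\ Qdim (SF G f) (totient #|G| %/ #|Hf G f|).
Proof.
have [Qn galQn [QnC QnC_aut [w [prim_w gen_w] Qn_char]]] := group_num_field_exists G.
have Qn_chi i x : x \in G -> exists a, QnC a = 'chi[G]_i x.
  by move=> Gx; have [a <-] := Qn_char _ G _ (irr_char i) x (order_dvdG Gx); exists a.
have [w0 prim_w0 <-] : exists2 w0, #|G|.-primitive_root w0 & QnC w0 = z.
  have prim_Cw : #|G|.-primitive_root (QnC w) by rewrite fmorph_primitive_root.
  have [j Dz] := prim_rootP prim_Cw (prim_expr_order zprim).
  by exists (w ^+ j); rewrite -?(fmorph_primitive_root QnC) rmorphXn -Dz.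
have gen_w0 := prim_root_generates prim_w gen_w prim_w0.
split=> [x | ].
  rewrite (SF_spectral_field fclass Qn_chi) (gen_field_prim_root QnC gen_w0).
  exact: (spectral_field_fixedP fclass galQn prim_w0 QnC_aut Qn_chi).
rewrite -(dim_spectral_field fclass galQn prim_w0 gen_w0 QnC_aut Qn_chi).
exact/Qdim_vimage/SF_spectral_field.
Qed.
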